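(* Let $q_1,q_2:\mathbb{R}\to[0,\infty)$ be even probability densities, $r_1,r_2:\mathbb{R}\to\mathbb{R}$ measurable, $A=\sum_i a_i|i\rangle\langle i|$ Hermitian on a finite-dimensional Hilbert space $\mathcal{H}$, $t_1,t_2\ge0$, and suppose $\int|r_m(p)|q_m(a_it_m-p)\,dp<\infty$ for $m=1,2$ and all eigenvalues $a_i$; put $s_m\coloneqq q_m*r_m$. Let $\rho$ be a density operator on $\mathcal{H}$, $|q_m\rangle\coloneqq\int dp\sqrt{q_m(p)}|p\rangle$, and $W\coloneqq e^{i\hat{x}_2\otimes At_2}e^{i\hat{x}_1\otimes At_1}$ acting on (mode 1)$\otimes$(mode 2)$\otimes\mathcal{H}$. Define the joint outcome density $$P(p_1,p_2)\coloneqq\operatorname{Tr}\!\left[(|p_1\rangle\langle p_1|\otimes|p_2\rangle\langle p_2|\otimes I)W(|q_1\rangle\langle q_1|\otimes|q_2\rangle\langle q_2|\otimes\rho)W^\dagger\right].$$ Then $$\int\!\!\int r_1(p_1)r_2(p_2)P(p_1,p_2)\,dp_1\,dp_2=\operatorname{Tr}\!\left[s_1(At_1)\,s_2(At_2)\,\rho\right].$$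
   Context: Each control qumode has Hilbert space $L^2(\mathbb{R})$ with generalized position/momentum eigenbases $\{|x\rangle\},\{|p\rangle\}$, $\langle x|p\rangle=e^{ipx}/\sqrt{2\pi}$; $\hat{x}_m$ is the position quadrature of mode $m$, and for Hermitian $B=\sum_ib_i|i\rangle\langle i|$, $e^{i\hat{x}_m\otimes B}=\sum_i\int dx\,e^{ixb_i}|x\rangle\langle x|_m\otimes|i\rangle\langle i|$. Convolution: $(f*g)(a)=\int f(a-p)g(p)\,dp$; $s_m(At_m)$ by functional calculus. *)

From HB Require Import structures.
From mathcomp Require Import all_boot all_order all_algebra.
From mathcomp Require Import all_classical all_reals all_analysis.
From mathcomp Require Import complex.
Set Implicit Arguments. Unset Strict Implicit. Unset Printing Implicit Defensive.
Import Order.TTheory GRing.Theory Num.Theory.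
Local Open Scope ring_scope.

Section Defs.
Variable R : realType.
Local Notation C := (R[i]).

Definition adj_mx (m n : nat) (M : 'M[C]_(m, n)) : 'M[C]_(n, m) :=
  (map_mx conjc M)^T.

(** The finite-dimensional Hilbert space H = C^n; an orthonormal basis
    {|i>} is given by the columns of a unitary matrix U. *)
Definition unitary_mx (n : nat) (U : 'M[C]_n) : Prop := adj_mx U *m U = 1%:M.

Definition proj (n : nat) (U : 'M[C]_n) (i : 'I_n) : 'M[C]_n :=
  col i U *m adj_mx (col i U).

Definition funcalc (n : nat) (U : 'M[C]_n) (b : 'I_n -> R) (f : R -> R)
  : 'M[C]_n := \sum_i ((f (b i))%:C)%C *: proj U i.

Definition herm_of (n : nat) (U : 'M[C]_n) (a : 'I_n -> R) : 'M[C]_n :=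
  funcalc U a id.

Definition density_op (n : nat) (rho : 'M[C]_n) : Prop :=
  adj_mx rho = rho /\
  (forall v : 'cV[C]_n, 0 <= (adj_mx v *m rho *m v) 0 0) /\
  \tr rho = 1.

Definition even_prob_density (q : R -> R) : Prop :=
  measurable_fun setT q /\ (forall x, 0 <= q x) /\
  (\int[lebesgue_measure]_x (q x)%:E = 1)%E /\ (forall x, q (- x) = q x).

Definition convolution (f g : R -> R) (x : R) : R :=
  Rintegral lebesgue_measure setT (fun p => f (x - p) * g p).

(** Operators on (mode 1) (x) (mode 2) (x) H are represented by their
    kernels in the (generalized) momentum bases:
    K p1 p2 p1' p2' = <p1, p2| X |p1', p2'>  in End(H) = 'M_n. *)
Definition kernel (n : nat) := R -> R -> R -> R -> 'M[C]_n.

(** Momentum wave function of |q> = int dp sqrt(q p) |p>. *)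
Definition ket_q (q : R -> R) (p : R) : R := Num.sqrt (q p).

Definition init_state (n : nat) (q1 q2 : R -> R) (rho : 'M[C]_n) : kernel n :=
  fun p1 p2 p1' p2' =>
    ((ket_q q1 p1 * ket_q q1 p1' * ket_q q2 p2 * ket_q q2 p2')%:C)%C *: rho.

(** With <x|p> = e^{ipx}/sqrt(2 pi), e^{i x b}|p> = |p + b>; hence the
    controlled operator E_m = e^{i x_m (x) B}, B = sum_i b_i |i><i|, acts
    on momentum kernels by shifting the m-th momentum by b_i on the
    i-th eigenspace.  E_m X and X E_m^dagger: *)
Definition lmul1 (n : nat) (U : 'M[C]_n) (b : 'I_n -> R) (K : kernel n)
  : kernel n := fun p1 p2 p1' p2' =>
  \sum_i proj U i *m K (p1 - b i) p2 p1' p2'.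
Definition lmul2 (n : nat) (U : 'M[C]_n) (b : 'I_n -> R) (K : kernel n)
  : kernel n := fun p1 p2 p1' p2' =>
  \sum_i proj U i *m K p1 (p2 - b i) p1' p2'.
Definition rmul1_adj (n : nat) (U : 'M[C]_n) (b : 'I_n -> R) (K : kernel n)
  : kernel n := fun p1 p2 p1' p2' =>
  \sum_j K p1 p2 (p1' - b j) p2' *m proj U j.
Definition rmul2_adj (n : nat) (U : 'M[C]_n) (b : 'I_n -> R) (K : kernel n)
  : kernel n := fun p1 p2 p1' p2' =>
  \sum_j K p1 p2 p1' (p2' - b j) *m proj U j.

Definition W_conj (n : nat) (U : 'M[C]_n) (a : 'I_n -> R) (t1 t2 : R)
  (K : kernel n) : kernel n :=
  let b1 := fun i => a i * t1 in
  let b2 := fun i => a i * t2 in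
  lmul2 U b2 (lmul1 U b1 (rmul2_adj U b2 (rmul1_adj U b1 K))).

(** Joint outcome density
    P(p1,p2) = Tr[(|p1><p1| (x) |p2><p2| (x) I) W (...) W^dagger]
             = tr_H <p1,p2| W (...) W^dagger |p1,p2>. *)
Definition joint_density (n : nat) (U : 'M[C]_n) (a : 'I_n -> R)
  (t1 t2 : R) (q1 q2 : R -> R) (rho : 'M[C]_n) (p1 p2 : R) : C :=
  \tr (W_conj U a t1 t2 (init_state q1 q2 rho) p1 p2 p1 p2).

End Defs.

From Pilot Require Import Defs.
From HB Require Import structures.
From mathcomp Require Import all_boot all_order all_algebra.
From mathcomp Require Import all_classical all_reals all_analysis.
From mathcomp Require Import complex ring measurable_realfun.
Import Order.TTheory GRing.Theory Num.Theory.
Local Open Scope ring_scope.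

(* Both controlled displacements are diagonal in the eigenbasis {|i>} of A:
   on the i-th eigenspace they shift the momentum of mode m by a_i t_m.  As
   the spectral projections Pi_i are mutually orthogonal, every cross term of
   W (|q1><q1| (x) |q2><q2| (x) rho) W^dagger dies under the trace, and
   P(p1,p2) = sum_i q1(p1 - a_i t1) q2(p2 - a_i t2) Tr(Pi_i rho) is a finite
   mixture of product densities.  Integrating r1(p1) r2(p2) against it
   factorises term by term, and since q_m is even each factor
   int r_m(p) q_m(p - a_i t_m) dp equals s_m(a_i t_m); expanding
   s1(A t1) s2(A t2) in the same eigenbasis gives the same sum. *)

Section spectral_projections.
Variable R : realType.
Local Notation C := R[i].
Variables (n : nat) (U : 'M[C]_n).
Hypothesis unitaryU : unitary_mx U.
Local Notation Pi := (Defs.proj U).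

Lemma proj_mul (i j : 'I_n) : Pi i *m Pi j = if i == j then Pi i else 0.
Proof.
have col_orth : adj_mx (col i U) *m col j U = ((i == j)%:R)%:M.
  have := congr1 (fun M : 'M[C]_n => M i j) unitaryU; rewrite /= !mxE => <-.
  apply/matrixP => x y; rewrite !ord1 !mxE eqxx mulr1n.
  by apply: eq_bigr => k _; rewrite !mxE.
rewrite /Defs.proj mulmxA -(mulmxA (col i U)) col_orth mul_mx_scalar.
by case: eqP => [<-|_]; rewrite ?scale1r // scale0r mul0mx.
Qed.

Lemma sum_mul_projr (G : 'I_n -> 'M[C]_n) (k : 'I_n) :
  (\sum_j G j *m Pi j) *m Pi k = G k *m Pi k.
Proof.
rewrite mulmx_suml (bigD1 k) //= -mulmxA proj_mul eqxx big1 ?addr0 // => j /negbTE nejk.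
by rewrite -mulmxA proj_mul nejk mulmx0.
Qed.

Lemma proj_mul_suml (G : 'I_n -> 'M[C]_n) (l : 'I_n) :
  Pi l *m (\sum_i Pi i *m G i) = Pi l *m G l.
Proof.
rewrite mulmx_sumr (bigD1 l) //= mulmxA proj_mul eqxx big1 ?addr0 // => i /negbTE neil.
by rewrite mulmxA proj_mul eq_sym neil mul0mx.
Qed.

Lemma mxtrace_proj_conj (M : 'M[C]_n) (k l : 'I_n) :
  \tr (Pi l *m M *m Pi k) = if k == l then \tr (Pi l *m M) else 0.
Proof.
rewrite mxtrace_mulC mulmxA proj_mul.
by case: eqP => [->|_]; rewrite ?mul0mx ?mxtrace0.
Qed.

Lemma mxtrace_proj_conj_diag (F : 'I_n -> 'I_n -> 'I_n -> 'I_n -> C) (rho : 'M[C]_n) :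
  \tr (\sum_l Pi l *m \sum_i Pi i *m
         \sum_k (\sum_j F l i k j *: rho *m Pi j) *m Pi k)
  = \sum_i F i i i i * \tr (Pi i *m rho).
Proof.
rewrite raddf_sum; apply: eq_bigr => l _.
rewrite proj_mul_suml.
under eq_bigr do rewrite sum_mul_projr.
rewrite mulmx_sumr raddf_sum (bigD1 l) //= big1 ?addr0.
  by rewrite mulmxA mxtrace_proj_conj eqxx -scalemxAr mxtraceZ.
by move=> k /negbTE nekl; rewrite mulmxA mxtrace_proj_conj nekl.
Qed.

Lemma funcalc_mul (b1 b2 : 'I_n -> R) (f1 f2 : R -> R) :
  funcalc U b1 f1 *m funcalc U b2 f2 = \sum_i ((f1 (b1 i) * f2 (b2 i))%:C)%C *: Pi i.
Proof.
rewrite /funcalc mulmx_suml; apply: eq_bigr => i _.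
rewrite mulmx_sumr (bigD1 i) //= big1 ?addr0.
  by rewrite -scalemxAl -scalemxAr proj_mul eqxx scalerA rmorphM.
by move=> j /negbTE neji; rewrite -scalemxAl -scalemxAr proj_mul eq_sym neji !scaler0.
Qed.

Lemma mxtrace_funcalc_mul (b1 b2 : 'I_n -> R) (f1 f2 : R -> R) (rho : 'M[C]_n) :
  \tr (funcalc U b1 f1 *m funcalc U b2 f2 *m rho) =
  \sum_i ((f1 (b1 i) * f2 (b2 i))%:C)%C * \tr (Pi i *m rho).
Proof.
rewrite funcalc_mul mulmx_suml raddf_sum; apply: eq_bigr => i _.
by rewrite /= -scalemxAl mxtraceZ.
Qed.

Lemma joint_density_spectral (a : 'I_n -> R) (t1 t2 : R) (q1 q2 : R -> R)
    (rho : 'M[C]_n) (p1 p2 : R) :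
  (forall x, 0 <= q1 x) -> (forall x, 0 <= q2 x) ->
  joint_density U a t1 t2 q1 q2 rho p1 p2 =
  \sum_i ((q1 (p1 - a i * t1) * q2 (p2 - a i * t2))%:C)%C * \tr (Pi i *m rho).
Proof.
move=> q1_ge0 q2_ge0.
rewrite /joint_density /W_conj /lmul2 /lmul1 /rmul2_adj /rmul1_adj /init_state.
rewrite mxtrace_proj_conj_diag; apply: eq_bigr => i _.
by rewrite /ket_q -expr2 -mulrA -expr2 !sqr_sqrtr.
Qed.

End spectral_projections.

Section Rintegral_sum.
Context d (T : measurableType d) (R : realType) (mu : {measure set T -> \bar R}).
Variables (D : set T) (mD : measurable D).

Lemma Rintegral_sum (I : Type) (s : seq I) (f : I -> T -> R) :
  (forall i, mu.-integrable D (EFin \o f i)) ->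
  \int[mu]_(x in D) \sum_(i <- s) f i x = \sum_(i <- s) \int[mu]_(x in D) f i x.
Proof.
move=> intf; rewrite /Rintegral.
under eq_integral do rewrite -sumEFin.
rewrite integral_sum // -EFin_sum_fine // => i _.
by apply: integrable_fin_num; [exact: mD | exact: intf].
Qed.

Lemma Rintegral_lin_comb (I : Type) (s : seq I) (k : I -> R) (f : I -> T -> R) :
  (forall i, mu.-integrable D (EFin \o f i)) ->
  \int[mu]_(x in D) \sum_(i <- s) k i * f i x
  = \sum_(i <- s) k i * \int[mu]_(x in D) f i x.
Proof.
move=> intf; rewrite Rintegral_sum => [|i].
  by apply: eq_bigr => i _; rewrite RintegralZl.
apply: (eq_integrable mD _ _ _ (integrableZl mD (k i) (intf i))).
by move=> x _ /=; rewrite EFinM.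
Qed.

End Rintegral_sum.

Lemma Rintegral2_sum_mul d1 d2 (T1 : measurableType d1) (T2 : measurableType d2)
    (R : realType) (mu1 : {measure set T1 -> \bar R}) (mu2 : {measure set T2 -> \bar R})
    (D1 : set T1) (D2 : set T2) (I : Type) (s : seq I)
    (c : I -> R) (f : I -> T1 -> R) (g : I -> T2 -> R) :
  measurable D1 -> measurable D2 ->
  (forall i, mu1.-integrable D1 (EFin \o f i)) ->
  (forall i, mu2.-integrable D2 (EFin \o g i)) ->
  \int[mu2]_(y in D2) \int[mu1]_(x in D1) \sum_(i <- s) c i * (f i x * g i y)
  = \sum_(i <- s) c i * \int[mu1]_(x in D1) f i x * \int[mu2]_(y in D2) g i y.
Proof.
move=> mD1 mD2 intf intg.
transitivity (\int[mu2]_(y in D2)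
    \sum_(i <- s) (c i * \int[mu1]_(x in D1) f i x) * g i y).
  apply: eq_Rintegral => y _.
  transitivity (\int[mu1]_(x in D1) \sum_(i <- s) (c i * g i y) * f i x).
    by apply: eq_Rintegral => x _; apply: eq_bigr => i _; ring.
  by rewrite Rintegral_lin_comb //; apply: eq_bigr => i _; ring.
by rewrite Rintegral_lin_comb.
Qed.

Section even_kernel.
Variables (R : realType) (q : R -> R).
Hypothesis q_even : forall x, q (- x) = q x.

Lemma even_subC (b p : R) : q (b - p) = q (p - b).
Proof. by rewrite -q_even opprB. Qed.

Lemma convolution_even (r : R -> R) (b : R) :
  convolution q r b = \int[lebesgue_measure]_(p in setT) (r p * q (p - b)).
Proof. by apply: eq_Rintegral => p _; rewrite even_subC mulrC. Qed.

Lemma integrable_mul_shift (r : R -> R) (b : R) :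
  measurable_fun setT q -> (forall x, 0 <= q x) -> measurable_fun setT r ->
  (\int[lebesgue_measure]_p (`|r p| * q (b - p))%:E < +oo)%E ->
  lebesgue_measure.-integrable setT (EFin \o (fun p => r p * q (p - b))).
Proof.
move=> mq q_ge0 mr fin_int; apply/integrableP; split.
  apply/measurable_EFinP; apply: measurable_funM => //.
  exact: measurableT_comp (measurable_funB _ _).
by under eq_integral do rewrite /= even_subC normrM (ger0_norm (q_ge0 _)).
Qed.

End even_kernel.

Section complex_parts.
Variable R : realType.

Lemma Re_sum_realCM (I : finType) (x : I -> R) (c : I -> R[i]) :
  complex.Re (\sum_i ((x i)%:C)%C * c i) = \sum_i x i * complex.Re (c i).
Proof.
elim/big_rec2: _ => // i y z _ <-.
by case: (c i) z => ? ? [? ?] /=; ring.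
Qed.

Lemma Im_sum_realCM (I : finType) (x : I -> R) (c : I -> R[i]) :
  complex.Im (\sum_i ((x i)%:C)%C * c i) = \sum_i x i * complex.Im (c i).
Proof.
elim/big_rec2: _ => // i y z _ <-.
by case: (c i) z => ? ? [? ?] /=; ring.
Qed.

End complex_parts.

Theorem theorem9 (R : realType) (n : nat)
  (q1 q2 r1 r2 : R -> R) (U : 'M[R[i]]_n) (a : 'I_n -> R) (t1 t2 : R)
  (rho : 'M[R[i]]_n) :
  even_prob_density q1 -> even_prob_density q2 ->
  measurable_fun setT r1 -> measurable_fun setT r2 ->
  unitary_mx U -> 0 <= t1 -> 0 <= t2 ->
  (forall i : 'I_n,
     (\int[lebesgue_measure]_p (`|r1 p| * q1 (a i * t1 - p))%:E < +oo)%E) ->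
  (forall i : 'I_n,
     (\int[lebesgue_measure]_p (`|r2 p| * q2 (a i * t2 - p))%:E < +oo)%E) ->
  density_op rho ->
  let P := joint_density U a t1 t2 q1 q2 rho in
  let s1 := convolution q1 r1 in
  let s2 := convolution q2 r2 in
  let rhs := \tr (funcalc U (fun i => a i * t1) s1
                  *m funcalc U (fun i => a i * t2) s2 *m rho) in
  Rintegral lebesgue_measure setT (fun p2 =>
    Rintegral lebesgue_measure setT (fun p1 =>
      r1 p1 * r2 p2 * complex.Re (P p1 p2))) = complex.Re rhs /\
  Rintegral lebesgue_measure setT (fun p2 =>
    Rintegral lebesgue_measure setT (fun p1 =>
      r1 p1 * r2 p2 * complex.Im (P p1 p2))) = complex.Im rhs.
Proof.
move=> [mq1 [q1_ge0 [_ q1_even]]] [mq2 [q2_ge0 [_ q2_even]]] mr1 mr2 unitaryU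
  _ _ fin1 fin2 _ P s1 s2 rhs.
set c := fun i => \tr (Defs.proj U i *m rho).
have P_mixture p1 p2 :
    P p1 p2 = \sum_i ((q1 (p1 - a i * t1) * q2 (p2 - a i * t2))%:C)%C * c i.
  exact: joint_density_spectral.
have rhs_diag : rhs = \sum_i ((s1 (a i * t1) * s2 (a i * t2))%:C)%C * c i.
  exact: mxtrace_funcalc_mul.
have integral_mixture (w : 'I_n -> R) :
    Rintegral lebesgue_measure setT (fun p2 =>
      Rintegral lebesgue_measure setT (fun p1 =>
        r1 p1 * r2 p2 * \sum_i q1 (p1 - a i * t1) * q2 (p2 - a i * t2) * w i))
    = \sum_i s1 (a i * t1) * s2 (a i * t2) * w i.
  transitivity (\sum_i w i *
      \int[lebesgue_measure]_(p in setT) (r1 p * q1 (p - a i * t1)) *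
      \int[lebesgue_measure]_(p in setT) (r2 p * q2 (p - a i * t2))).
    rewrite -Rintegral2_sum_mul //.
    - apply: eq_Rintegral => p2 _; apply: eq_Rintegral => p1 _.
      by rewrite mulr_sumr; apply: eq_bigr => i _; ring.
    - by move=> i; apply: integrable_mul_shift.
    - by move=> i; apply: integrable_mul_shift.
  by apply: eq_bigr => i _; rewrite /s1 /s2 !convolution_even //; ring.
split.
- under eq_Rintegral do under eq_Rintegral do rewrite P_mixture Re_sum_realCM.
  by rewrite integral_mixture rhs_diag Re_sum_realCM.
- under eq_Rintegral do under eq_Rintegral do rewrite P_mixture Im_sum_realCM.
  by rewrite integral_mixture rhs_diag Im_sum_realCM.
Qed.
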